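(* Let $r$ be a normalized formal generalized $r$-matrix. Then, with respect to the bilinear form $\kappa_0$ on $\mathfrak g(\!(z)\!)$, one has $\mathfrak g(r)^\perp=\mathfrak g(\bar r)$. Moreover, $r$ is skew-symmetric if and only if $\mathfrak g(r)^\perp=\mathfrak g(r)$.
   Context: $\Bbbk$ is a field of characteristic $0$, $\mathfrak g$ a finite-dimensional semisimple Lie algebra over $\Bbbk$ with Killing form $\kappa$, $\kappa$-orthonormal basis $\{b_i\}_{i=1}^d$ and Casimir $\gamma=\sum_ib_i\otimes b_i$; $\frac1{x-y}=\sum_{k\ge0}x^{-k-1}y^k$. A series $r\in(\mathfrak g\otimes\mathfrak g)(\!(x)\!)[\![y]\!]$ is in normalized standard form if $r=\frac{\gamma}{x-y}+r_0$, $r_0\in(\mathfrak g\otimes\mathfrak g)[\![x,y]\!]$; $\bar r(x,y)=\frac{\gamma}{x-y}-\tau(r_0(y,x))$ ($\tau$ the flip); skew-symmetric means $\bar r=r$. With $s^{ij}$ meaning substitution $(x,y)=(x_i,x_j)$ and placement in tensor positions $i,j$ in $(U(\mathfrak g)^{\otimes3})\otimes\Bbbk(\!(x_1)\!)(\!(x_2)\!)[\![x_3]\!]$, a normalized formal generalized $r$-matrix is such $r$ with $[r^{12},r^{13}]+[r^{12},r^{23}]+[r^{13},\bar r^{23}]=0$. For $s=\sum_{k,i}s_{k,i}(x)\otimes b_iy^k$, $\mathfrak g(s)=\mathrm{span}_\Bbbk\{s_{k,i}(z)\}$. The form $\kappa_0$ on $\mathfrak g(\!(z)\!)$ is $\kappa_0(s,t)=\mathrm{res}_0\kappa(s,t)\,dz=\sum_{k+\ell=-1}\kappa(s_k,t_\ell)$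 for $s=\sum s_kz^k$, $t=\sum t_kz^k$, and $\perp$ denotes orthogonal complement with respect to $\kappa_0$. *)

From HB Require Import structures.
From mathcomp Require Import all_boot all_order all_algebra.
From Stdlib Require Import ClassicalEpsilon.
Set Implicit Arguments. Unset Strict Implicit. Unset Printing Implicit Defensive.
Import Order.TTheory GRing.Theory Num.Theory.
Local Open Scope ring_scope.

(*  g is a finite-dimensional Lie algebra over k, realised on 'rV[k]_d *)
(*  with bracket br.  g (x) g is realised as 'M[k]_d :  u (x) v is     *)
(*  u^T *m v, so the flip tau is transposition, and an element M of    *)
(*  g(x)g equals  sum_{a,b} M a b  e_a (x) e_b  (e_a standard basis).  *)
(*  g (x) g (x) g is realised as {ffun 'I_d * 'I_d * 'I_d -> k}.       *)
(*  A series in (g(x)g)((x))[[y]] is given by its coefficient function *)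
(*  S : int -> nat -> 'M_d  (S p n = coefficient of x^p y^n).          *)
(*  A series in g((z)) is a function int -> 'rV_d (coefficient of z^p) *)
(*  which is a Laurent series when its support is bounded below.      *)

Section LieDefs.
Variables (k : fieldType) (d : nat).
Variable br : 'rV[k]_d -> 'rV[k]_d -> 'rV[k]_d.

Definition is_lie_bracket : Prop :=
  [/\ (forall (a : k) x y z, br (a *: x + y) z = a *: br x z + br y z),
      (forall (a : k) x y z, br z (a *: x + y) = a *: br z x + br z y),
      (forall x, br x x = 0) &
      (forall x y z, br x (br y z) + br y (br z x) + br z (br x y) = 0)].

Definition span_of (P : 'rV[k]_d -> Prop) (x : 'rV[k]_d) : Prop :=
  exists n (v : 'I_n -> 'rV[k]_d) (c : 'I_n -> k),
    (forall i, P (v i)) /\ x = \sum_(i < n) c i *: v i.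

Definition subspace (P : 'rV[k]_d -> Prop) : Prop :=
  P 0 /\ forall (a : k) x y, P x -> P y -> P (a *: x + y).

Definition ideal (P : 'rV[k]_d -> Prop) : Prop :=
  subspace P /\ forall x y, P y -> P (br x y).

Fixpoint derived (P : 'rV[k]_d -> Prop) (n : nat) : 'rV[k]_d -> Prop :=
  match n with
  | O => P
  | n'.+1 => span_of (fun z => exists x y,
               derived P n' x /\ derived P n' y /\ z = br x y)
  end.

Definition solvable (P : 'rV[k]_d -> Prop) : Prop :=
  exists n, forall x, derived P n x -> x = 0.

Definition semisimple : Prop :=
  forall I, ideal I -> solvable I -> forall x, I x -> x = 0.

Definition killing (x y : 'rV[k]_d) : k :=
  \tr (lin1_mx (br x) *m lin1_mx (br y)).

Definition ev (i : 'I_d) : 'rV[k]_d := delta_mx 0 i.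

Local Notation tens3 := {ffun 'I_d * 'I_d * 'I_d -> k}.

Definition t3 (x : k) (u v w : 'rV[k]_d) : tens3 :=
  [ffun l : 'I_d * 'I_d * 'I_d => x * (u 0 l.1.1 * v 0 l.1.2 * w 0 l.2)].

(* For A = sum A_ab e_a(x)e_b, B = sum B_cd e_c(x)e_d (elements of g(x)g): *)
(* [A^{12}, B^{13}] = sum [e_a,e_c] (x) e_b (x) e_d                     *)
Definition br12_13 (A B : 'M[k]_d) : tens3 :=
  \sum_(a < d) \sum_(b < d) \sum_(c < d) \sum_(e < d)
     t3 (A a b * B c e) (br (ev a) (ev c)) (ev b) (ev e).
(* [A^{12}, B^{23}] = sum e_a (x) [e_b,e_c] (x) e_d *)
Definition br12_23 (A B : 'M[k]_d) : tens3 :=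
  \sum_(a < d) \sum_(b < d) \sum_(c < d) \sum_(e < d)
     t3 (A a b * B c e) (ev a) (br (ev b) (ev c)) (ev e).
(* [A^{13}, B^{23}] = sum e_a (x) e_c (x) [e_b,e_d] *)
Definition br13_23 (A B : 'M[k]_d) : tens3 :=
  \sum_(a < d) \sum_(b < d) \sum_(c < d) \sum_(e < d)
     t3 (A a b * B c e) (ev a) (ev c) (br (ev b) (ev e)).

Variable bas : 'I_d -> 'rV[k]_d.

Definition basmx : 'M[k]_d := \matrix_(i < d) bas i.

Definition casimir : 'M[k]_d := \sum_(i < d) (bas i)^T *m bas i.

Variable r0 : nat -> nat -> 'M[k]_d. (* r0 = sum r0 m n x^m y^n *)

(* coefficient of x^p y^n of  r = gamma/(x-y) + r0(x,y),
   where gamma/(x-y) = sum_n x^(-n-1) y^n gamma *)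
Definition rcoef (p : int) (n : nat) : 'M[k]_d :=
  (if p == - (n.+1)%:Z then casimir else 0)
  + match p with Posz m => r0 m n | Negz _ => 0 end.

(* coefficient of x^p y^n of  rbar = gamma/(x-y) - tau(r0(y,x)) *)
Definition rbarcoef (p : int) (n : nat) : 'M[k]_d :=
  (if p == - (n.+1)%:Z then casimir else 0)
  - match p with Posz m => (r0 n m)^T | Negz _ => 0 end.

(* coefficient of x^p y^q of r for any integer q (zero if q < 0, since
   r lies in (g(x)g)((x))[[y]]) *)
Definition rcoefZ (p q : int) : 'M[k]_d :=
  match q with Posz n => rcoef p n | Negz _ => 0 end.

Definition isum (V : zmodType) (N : nat) (F : int -> V) : V :=
  \sum_(j < (N + N).+1) F (j%:Z - N%:Z).

(* Normalized formal generalized r-matrix:  for all a b : int, c : nat,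
   the coefficient of x1^a x2^b x3^c of
   [r^{12},r^{13}] + [r^{12},r^{23}] + [r^{13},rbar^{23}]
   in (g(x)g(x)g)((x1))((x2))[[x3]] vanishes.  The Cauchy sums are finite;
   the summation windows below contain all possibly nonzero terms:
   - first term : x1-exponents p of r^{12} (whose x2-exponent is b),
                  nonzero only for -(b+1) <= p <= a+c+1;
   - second term: x2-exponents p >= 0 of r^{12}, with b-p >= -(c+1);
   - third term : x3-exponents p >= 0 of r^{13}, c-p >= 0 of rbar^{23}. *)
Definition gen_rmatrix : Prop :=
  forall (a b : int) (c : nat),
    isum (absz a + absz b + c + 2)
         (fun p => br12_13 (rcoefZ p b) (rcoef (a - p) c))
    + \sum_(p < absz b + c + 2) br12_23 (rcoef a p) (rcoef (b - p%:Z) c)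
    + \sum_(p < c.+1) br13_23 (rcoef a p) (rbarcoef b (c - p))
    = 0.

Definition skew_symmetric : Prop :=
  forall p n, rbarcoef p n = rcoef p n.

(* The unique decomposition M = sum_i u_i (x) b_i (M in g(x)g) is
   u_i = column i of M * basmx^{-1}, since sum_i u_i^T b_i = U^T basmx. *)
Definition scomp (S : int -> nat -> 'M[k]_d) (kk : nat) (i : 'I_d)
  : int -> 'rV[k]_d :=
  fun p => \row_(a < d) (S p kk *m invmx basmx) a i.

Definition gsp (S : int -> nat -> 'M[k]_d) (t : int -> 'rV[k]_d) : Prop :=
  exists (N : nat) (c : nat -> 'I_d -> k),
    forall p, t p = \sum_(kk < N) \sum_(i < d) c kk i *: scomp S kk i p.

End LieDefs.

Section Laurent.
Variables (k : fieldType) (d : nat).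

Definition laurent (f : int -> 'rV[k]_d) : Prop :=
  exists N : nat, forall n : int, n < - (N%:Z) -> f n = 0.

(* a lower bound for the support (any, when f is Laurent) *)
Definition lowbound (f : int -> 'rV[k]_d) : nat :=
  epsilon (inhabits 0%N) (fun N : nat => forall n : int, n < - (N%:Z) -> f n = 0).

(* kappa_0(s,t) = res_0 kappa(s,t) dz = sum_{m+l=-1} kappa(s_m, t_l);
   for Laurent s,t only m in [-lowbound s, lowbound t - 1] contribute. *)
Definition kappa0 (br : 'rV[k]_d -> 'rV[k]_d -> 'rV[k]_d)
  (s t : int -> 'rV[k]_d) : k :=
  \sum_(j < lowbound s + lowbound t)
    killing br (s (j%:Z - (lowbound s)%:Z)) (t (- 1 - (j%:Z - (lowbound s)%:Z))).

Definition perp (br : 'rV[k]_d -> 'rV[k]_d -> 'rV[k]_d)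
  (V : (int -> 'rV[k]_d) -> Prop) (t : int -> 'rV[k]_d) : Prop :=
  laurent t /\ forall s, V s -> kappa0 br s t = 0.

End Laurent.

From HB Require Import structures.
From mathcomp Require Import all_boot all_order all_algebra.
From mathcomp Require Import zify.
From Stdlib Require Import ClassicalEpsilon.
Set Implicit Arguments. Unset Strict Implicit. Unset Printing Implicit Defensive.
Import Order.TTheory GRing.Theory Num.Theory.
Local Open Scope ring_scope.

(* Write w_(k,i) and wb_(k,i) for the generators s_(k,i) of g(r) and g(rbar).
   The polar part of both r and rbar is gamma/(x-y) = sum_k x^(-k-1) gamma y^k,
   so w_(k,i) = z^(-k-1) b_i + (power series), and likewise wb_(k,i).  Hence
   (1) kappa0(w_(k,i), t) = kappa(b_i, t_k) for every t in g[[z]];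
   (2) kappa0(w_(k,i), wb_(l,j)) = kappa(b_i, wb_(l,j)_k) + kappa(w_(k,i)_l, b_j)
       = 0, the two terms cancelling because rbar_0 = - tau(r0(y,x)).
   By (2) and bilinearity g(rbar) is orthogonal to g(r).  Conversely, from t in
   g(r)^perp subtract the element of g(rbar) with the same principal part: the
   difference lies in g[[z]] and in g(r)^perp, so it vanishes by (1) and the
   nondegeneracy of kappa.  The same argument applied to w_(n,i) - wb_(n,i)
   gives the skew-symmetry criterion. *)

Section KillingForm.
Variables (k : fieldType) (d : nat) (br : 'rV[k]_d -> 'rV[k]_d -> 'rV[k]_d).
Hypothesis br_lie : is_lie_bracket br.

Lemma killingC x y : killing br x y = killing br y x.
Proof. exact: mxtrace_mulC. Qed.

Lemma killingDr a x y z :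
  killing br z (a *: x + y) = a * killing br z x + killing br z y.
Proof.
have adD : lin1_mx (br (a *: x + y)) = a *: lin1_mx (br x) + lin1_mx (br y).
  by case: br_lie => brDl _ _ _; apply/matrixP => i j; rewrite !mxE brDl !mxE.
by rewrite /killing adD mulmxDr -scalemxAr mxtraceD mxtraceZ.
Qed.

Lemma killingBr z x y : killing br z (x - y) = killing br z x - killing br z y.
Proof. by rewrite -[x - y]addrC -scaleN1r killingDr mulN1r addrC. Qed.

Lemma killing0r z : killing br z 0 = 0.
Proof. by have := killingBr z 0 0; rewrite !subrr. Qed.

Lemma killing0l z : killing br 0 z = 0.
Proof. by rewrite killingC killing0r. Qed.

Lemma killingZl a x z : killing br (a *: x) z = a * killing br x z.
Proof. by rewrite killingC -[a *: x]addr0 killingDr killing0r addr0 killingC. Qed.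

Lemma killing_suml (I : Type) (r : seq I) (P : pred I) (F : I -> 'rV[k]_d) z :
  killing br (\sum_(i <- r | P i) F i) z = \sum_(i <- r | P i) killing br (F i) z.
Proof.
apply: (big_morph (fun x => killing br x z)) => [x y|]; last exact: killing0l.
by rewrite killingC -[x]scale1r killingDr mul1r scale1r !(killingC z).
Qed.

Variable bas : 'I_d -> 'rV[k]_d.
Hypothesis bas_unit : basmx bas \in unitmx.
Hypothesis bas_orthonormal : forall i j, killing br (bas i) (bas j) = (i == j)%:R.

Local Notation invB := (invmx (basmx bas)).

Lemma row_bas_expand (v : 'rV[k]_d) : v = \sum_i (v *m invB) 0 i *: bas i.
Proof.
rewrite -[LHS](mulmxKV bas_unit v) mulmx_sum_row.
by apply: eq_bigr => i _; rewrite rowK.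
Qed.

Lemma killing_basl i v : killing br (bas i) v = (v *m invB) 0 i.
Proof.
rewrite {1}(row_bas_expand v) killingC killing_suml (bigD1 i) //= killingZl.
rewrite bas_orthonormal eqxx mulr1 big1 ?addr0 // => j /negbTE ji.
by rewrite killingZl bas_orthonormal ji mulr0.
Qed.

Lemma killing_nondegenerate v : (forall i, killing br (bas i) v = 0) -> v = 0.
Proof.
move=> v0; rewrite (row_bas_expand v) big1 // => i _.
by rewrite -killing_basl v0 scale0r.
Qed.

Lemma killing_bas_col i j (M : 'M[k]_d) :
  killing br (bas i) (\row_a M a j) = (invB^T *m M) i j.
Proof.
rewrite killing_basl !mxE; apply: eq_bigr => a _.
by rewrite !mxE mulrC.
Qed.

(* The algebraic identity behind (2): the pairings of the expansion
   coefficients of R and of -R^T against the basis cancel. *)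
Lemma killing_transpose_pairing (R : 'M[k]_d) i j :
  killing br (bas i) (\row_a ((- R^T) *m invB) a j)
  + killing br (bas j) (\row_a (R *m invB) a i) = 0.
Proof.
have trE : (invB^T *m (R *m invB))^T = invB^T *m (R^T *m invB).
  by rewrite !trmx_mul trmxK mulmxA.
rewrite !killing_bas_col mulNmx mulmxN -trE mxE.
by rewrite [in X in X + _]mxE addNr.
Qed.

End KillingForm.

Section WindowSums.
Variable V : zmodType.
Implicit Types (A B : nat) (p q : int) (f : int -> V).

Definition wsum A B f : V := \sum_(j < A + B) f (j%:Z - A%:Z).

Lemma wsum_widen A B A' B' f : (A <= A')%N -> (B <= B')%N ->
  (forall p, p < - A%:Z -> f p = 0) -> (forall p, B%:Z <= p -> f p = 0) ->
  wsum A B f = wsum A' B' f.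
Proof.
move=> leAA' leBB' f_low f_high.
have widenl n : wsum A B f = wsum (A + n) B f.
  elim: n => [|n IHn]; first by rewrite addn0.
  rewrite IHn /wsum addnS addSn big_ord_recl /= f_low ?add0r; last by lia.
  by apply: eq_bigr => j _; congr f; rewrite /bump leq0n add1n; lia.
have widenr A0 n : wsum A0 B f = wsum A0 (B + n) f.
  elim: n => [|n IHn]; first by rewrite addn0.
  by rewrite IHn /wsum !addnS big_ord_recr /= [X in _ + X]f_high ?addr0 //; lia.
by rewrite (widenl (A' - A)%N) subnKC // (widenr _ (B' - B)%N) subnKC.
Qed.

Lemma wsum_single A B f q : - A%:Z <= q -> q < B%:Z ->
  (forall p, - A%:Z <= p -> p < B%:Z -> p != q -> f p = 0) ->
  wsum A B f = f q.
Proof.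
move=> lo hi f_q.
have j0_lt : (absz (q + A%:Z)%R < A + B)%N by lia.
rewrite /wsum (bigD1 (Ordinal j0_lt)) //= big1 ?addr0; first by congr f; lia.
move=> j ne_j; have := ltn_ord j => lt_j; apply: f_q; [lia | lia |].
by apply: contraNneq ne_j => E; apply/eqP/val_inj => /=; lia.
Qed.

Lemma wsum_split A B f : wsum A B f = wsum A 0 f + wsum 0 B f.
Proof.
rewrite /wsum addn0 big_split_ord /=.
by congr (_ + _); apply: eq_bigr => j _; rewrite PoszD addrC addKr subr0.
Qed.

Lemma wsum_reflect A B f : wsum A B f = wsum B A (fun p => f (-1 - p)).
Proof.
rewrite /wsum (reindex_inj rev_ord_inj) addnC.
by apply: eq_bigr => j _ /=; congr f; have := ltn_ord j; lia.
Qed.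

End WindowSums.

(* f has no coefficients below z^(-N); f in g[[z]] is the case N = 0, and
   laurent f means that f vanishes below some N. *)
Definition vanishes_below (k : fieldType) (d : nat) (N : nat) (f : int -> 'rV[k]_d) :=
  forall n : int, n < - N%:Z -> f n = 0.

Lemma vanishes_below_widen (k : fieldType) (d : nat) N N' (f : int -> 'rV[k]_d) :
  (N <= N')%N -> vanishes_below N f -> vanishes_below N' f.
Proof. by move=> leNN' fN n n_lt; apply: fN; lia. Qed.

Lemma lowbound_vanishes (k : fieldType) (d : nat) (f : int -> 'rV[k]_d) :
  laurent f -> vanishes_below (lowbound f) f.
Proof. exact: epsilon_spec. Qed.

Lemma laurentB (k : fieldType) (d : nat) (t u : int -> 'rV[k]_d) :
  laurent t -> laurent u -> laurent (fun p => t p - u p).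
Proof.
move=> [B tB] [C uC]; exists (maxn B C) => n n_lt.
rewrite (vanishes_below_widen (leq_maxl B C) tB) //.
by rewrite (vanishes_below_widen (leq_maxr B C) uC) ?subrr.
Qed.

Section ResiduePairing.
Variables (k : fieldType) (d : nat) (br : 'rV[k]_d -> 'rV[k]_d -> 'rV[k]_d).
Hypothesis br_lie : is_lie_bracket br.
Implicit Types s t u : int -> 'rV[k]_d.

(* kappa0 can be computed on any window enclosing the supports: this is what
   makes the residue pairing independent of the chosen bounds. *)
Lemma kappa0_window A B s t : vanishes_below A s -> vanishes_below B t ->
  kappa0 br s t = wsum A B (fun p => killing br (s p) (t (-1 - p))).
Proof.
move=> sA tB; set F := fun p => _.
have F_low A' : vanishes_below A' s -> forall p, p < - A'%:Z -> F p = 0.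
  by move=> sA' p /sA' s0; rewrite /F s0 killing0l.
have F_high B' : vanishes_below B' t -> forall p, B'%:Z <= p -> F p = 0.
  by move=> tB' p leBp; rewrite /F tB' ?killing0r //; lia.
have sL := lowbound_vanishes (ex_intro _ A sA).
have tL := lowbound_vanishes (ex_intro _ B tB).
transitivity (wsum (lowbound s) (lowbound t) F); first by [].
rewrite (wsum_widen (leq_maxl (lowbound s) A) (leq_maxl (lowbound t) B));
  [|exact: F_low sL|exact: F_high tL].
by rewrite [RHS](wsum_widen (leq_maxr (lowbound s) A) (leq_maxr (lowbound t) B));
  [|exact: F_low sA|exact: F_high tB].
Qed.

Lemma kappa0_ext s s' t t' : s =1 s' -> t =1 t' -> laurent s -> laurent t ->
  kappa0 br s t = kappa0 br s' t'.
Proof.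
move=> eq_s eq_t [A sA] [B tB].
have s'A : vanishes_below A s' by move=> n /sA; rewrite eq_s.
have t'B : vanishes_below B t' by move=> n /tB; rewrite eq_t.
rewrite (kappa0_window sA tB) (kappa0_window s'A t'B).
by apply: eq_bigr => j _; rewrite eq_s eq_t.
Qed.

Lemma kappa0_sym s t : laurent s -> laurent t -> kappa0 br s t = kappa0 br t s.
Proof.
move=> [A sA] [B tB]; rewrite (kappa0_window sA tB) (kappa0_window tB sA) wsum_reflect.
by apply: eq_bigr => j _; rewrite killingC opprB addrCA subrr addr0.
Qed.

Lemma kappa0_subr s t u : laurent s -> laurent t -> laurent u ->
  kappa0 br s (fun p => t p - u p) = kappa0 br s t - kappa0 br s u.
Proof.
move=> [A sA] [B tB] [C uC].
have tM := vanishes_below_widen (leq_maxl B C) tB.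
have uM := vanishes_below_widen (leq_maxr B C) uC.
have tuM : vanishes_below (maxn B C) (fun p => t p - u p).
  by move=> n n_lt; rewrite tM ?uM ?subrr.
rewrite !(kappa0_window sA tuM, kappa0_window sA tM, kappa0_window sA uM) /wsum -sumrB.
by apply: eq_bigr => j _; rewrite killingBr.
Qed.

Lemma perp_sub (V : (int -> 'rV[k]_d) -> Prop) t u :
  (forall s, V s -> laurent s) -> perp br V t -> perp br V u ->
  perp br V (fun p => t p - u p).
Proof.
move=> V_laurent [tL t_perp] [uL u_perp]; split; first exact: laurentB.
by move=> s Vs; rewrite kappa0_subr ?t_perp ?u_perp ?subrr //; apply: V_laurent.
Qed.

End ResiduePairing.

(* The polar part of S (coefficients of negative powers of x) is
   gamma/(x-y) = sum_n x^(-n-1) gamma y^n; both r and rbar have this form. *)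
Definition casimir_polar (k : fieldType) (d : nat) (bas : 'I_d -> 'rV[k]_d)
  (S : int -> nat -> 'M[k]_d) : Prop :=
  forall q n, S (Negz q) n = if q == n then casimir bas else 0.

Definition comb (k : fieldType) (d : nat) (bas : 'I_d -> 'rV[k]_d)
  (S : int -> nat -> 'M[k]_d) (N : nat) (c : nat -> 'I_d -> k) : int -> 'rV[k]_d :=
  fun p => \sum_(kk < N) \sum_(i < d) c kk i *: scomp bas S kk i p.

Lemma casimirE (k : fieldType) (d : nat) (bas : 'I_d -> 'rV[k]_d) :
  casimir bas = (basmx bas)^T *m basmx bas.
Proof.
apply/matrixP => a b; rewrite /casimir summxE !mxE; apply: eq_bigr => i _.
by rewrite !mxE big_ord1 !mxE.
Qed.

Lemma gsp_ext (k : fieldType) (d : nat) (bas : 'I_d -> 'rV[k]_d) S S' t :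
  S =2 S' -> gsp bas S t -> gsp bas S' t.
Proof.
move=> eqS [N [c tE]]; exists N, c => p; rewrite tE.
by apply: eq_bigr => kk _; apply: eq_bigr => i _; rewrite /scomp eqS.
Qed.

Lemma gsp_scomp (k : fieldType) (d : nat) (bas : 'I_d -> 'rV[k]_d) S m i :
  gsp bas S (scomp bas S m i).
Proof.
exists m.+1, (fun kk j => ((kk == m) && (j == i))%:R) => p.
rewrite big_ord_recr /= big1 ?add0r.
  rewrite eqxx (bigD1 i) //= eqxx scale1r big1 ?addr0 // => j /negbTE ->.
  by rewrite scale0r.
move=> kk _; rewrite big1 // => j _.
by rewrite (ltn_eqF (ltn_ord kk)) scale0r.
Qed.

Section StandardForm.
Variables (k : fieldType) (d : nat) (bas : 'I_d -> 'rV[k]_d).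
Variable S : int -> nat -> 'M[k]_d.
Hypothesis bas_unit : basmx bas \in unitmx.
Hypothesis S_polar : casimir_polar bas S.

Lemma scomp_neg kk i q : scomp bas S kk i (Negz q) = if q == kk then bas i else 0.
Proof.
rewrite /scomp S_polar; case: eqP => _.
  by rewrite casimirE mulmxK //; apply/rowP => b; rewrite !mxE.
by rewrite mul0mx; apply/rowP => b; rewrite !mxE.
Qed.

Lemma scomp_vanishes kk i : vanishes_below kk.+1 (scomp bas S kk i).
Proof.
case=> [m|q] q_lt; first by lia.
by rewrite scomp_neg; case: eqP => // q_kk; rewrite NegzE in q_lt; lia.
Qed.

Lemma comb_vanishes N c : vanishes_below N (comb bas S N c).
Proof.
move=> n n_lt; rewrite /comb big1 // => kk _; rewrite big1 // => i _.
by rewrite (vanishes_below_widen (ltn_ord kk) (@scomp_vanishes kk i)) ?scaler0.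
Qed.

Lemma comb_neg N c q : (q < N)%N -> comb bas S N c (Negz q) = \sum_i c q i *: bas i.
Proof.
move=> q_lt; rewrite /comb (bigD1 (Ordinal q_lt)) //= [X in _ + X]big1 ?addr0.
  by apply: eq_bigr => i _; rewrite scomp_neg eqxx.
move=> kk kk_q; rewrite big1 // => i _; rewrite scomp_neg.
case: eqP => [q_kk|_]; last by rewrite scaler0.
by rewrite -val_eqE /= q_kk eqxx in kk_q.
Qed.

Lemma scomp_laurent kk i : laurent (scomp bas S kk i).
Proof. by exists kk.+1; apply: scomp_vanishes. Qed.

Lemma comb_laurent N c : laurent (comb bas S N c).
Proof. by exists N; apply: comb_vanishes. Qed.

Lemma gsp_laurent t : gsp bas S t -> laurent t.
Proof. by move=> [N [c tE]]; exists N => n n_lt; rewrite tE; apply: comb_vanishes. Qed.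

End StandardForm.

Lemma reflect_Negz (q : nat) : -1 - Negz q = Posz q.
Proof. by rewrite NegzE; lia. Qed.

Lemma reflect_Posz (q : nat) : -1 - Posz q = Negz q.
Proof. by rewrite NegzE; lia. Qed.

Section Generators.
Variables (k : fieldType) (d : nat) (br : 'rV[k]_d -> 'rV[k]_d -> 'rV[k]_d).
Variable bas : 'I_d -> 'rV[k]_d.
Variables S S' : int -> nat -> 'M[k]_d.
Hypothesis br_lie : is_lie_bracket br.
Hypothesis bas_unit : basmx bas \in unitmx.
Hypothesis S_polar : casimir_polar bas S.
Hypothesis S'_polar : casimir_polar bas S'.
Hypothesis bas_orthonormal : forall i j, killing br (bas i) (bas j) = (i == j)%:R.

Lemma kappa0_scomp_taylor m i t : vanishes_below 0 t ->
  kappa0 br (scomp bas S m i) t = killing br (bas i) (t m).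
Proof.
move=> t0; rewrite (kappa0_window br_lie (scomp_vanishes bas_unit S_polar i) t0).
have S_neg := scomp_neg bas_unit S_polar.
rewrite (wsum_single (q := Negz m)) ?S_neg ?eqxx ?reflect_Negz //; try by rewrite NegzE; lia.
case=> q _ q_neg ne_m; first by lia.
rewrite S_neg; case: eqP => [q_m|_]; last by rewrite killing0l.
by rewrite q_m eqxx in ne_m.
Qed.

Lemma perp_taylor_zero t :
  perp br (gsp bas S) t -> vanishes_below 0 t -> forall p, t p = 0.
Proof.
move=> [_ t_perp] t0 [m|q]; last by apply: t0; rewrite NegzE; lia.
apply: (killing_nondegenerate br_lie bas_unit bas_orthonormal) => i.
by rewrite -kappa0_scomp_taylor // t_perp //; apply: gsp_scomp.
Qed.

(* Pairing of two generators: only the principal term of each contributes. *)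
Lemma kappa0_scomp_pair kk i l j :
  kappa0 br (scomp bas S kk i) (scomp bas S' l j)
  = killing br (bas i) (scomp bas S' l j kk) + killing br (scomp bas S kk i l) (bas j).
Proof.
rewrite (kappa0_window br_lie (scomp_vanishes bas_unit S_polar i)
                              (scomp_vanishes bas_unit S'_polar j)) wsum_split.
have S_neg := scomp_neg bas_unit S_polar; have S'_neg := scomp_neg bas_unit S'_polar.
congr (_ + _).
  rewrite (wsum_single (q := Negz kk)) ?S_neg ?eqxx ?reflect_Negz //; try by rewrite NegzE; lia.
  case=> q _ q_neg ne_kk; first by lia.
  rewrite S_neg; case: eqP => [q_kk|_]; last by rewrite killing0l.
  by rewrite q_kk eqxx in ne_kk.
rewrite (wsum_single (q := Posz l)) ?reflect_Posz ?S'_neg ?eqxx //; try by lia.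
case=> q q_nonneg q_lt ne_l; last by rewrite NegzE in q_nonneg; lia.
rewrite reflect_Posz S'_neg; case: eqP => [q_l|_]; last by rewrite killing0r.
by rewrite q_l eqxx in ne_l.
Qed.

Lemma kappa0_comb_l N c t : laurent t ->
  kappa0 br (comb bas S N c) t
  = \sum_(kk < N) \sum_(i < d) c kk i * kappa0 br (scomp bas S kk i) t.
Proof.
move=> [B tB].
rewrite (kappa0_window br_lie (comb_vanishes bas_unit S_polar c) tB) /wsum /comb.
under eq_bigr do rewrite (killing_suml br_lie).
rewrite exchange_big; apply: eq_bigr => kk _.
under eq_bigr do rewrite (killing_suml br_lie).
rewrite exchange_big; apply: eq_bigr => i _.
have wN := vanishes_below_widen (ltn_ord kk) (scomp_vanishes bas_unit S_polar i).
rewrite (kappa0_window br_lie wN tB) mulr_sumr.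
by apply: eq_bigr => j _; rewrite killingZl.
Qed.

End Generators.

Lemma scomp_inj (k : fieldType) (d : nat) (bas : 'I_d -> 'rV[k]_d) S S' n p :
  basmx bas \in unitmx ->
  (forall i, scomp bas S n i p = scomp bas S' n i p) -> S p n = S' p n.
Proof.
move=> bas_unit eq_w; rewrite -[S p n](mulmxKV bas_unit) -[S' p n](mulmxKV bas_unit).
congr (_ *m _); apply/matrixP => a i.
by have := congr1 (fun v : 'rV[k]_d => v 0 a) (eq_w i); rewrite !mxE.
Qed.

Lemma rcoef_polar (k : fieldType) (d : nat) (bas : 'I_d -> 'rV[k]_d) r0 :
  casimir_polar bas (rcoef bas r0).
Proof. by move=> q n; rewrite /rcoef addr0; congr (if _ then _ else _); apply/eqP/eqP; lia. Qed.

Lemma rbarcoef_polar (k : fieldType) (d : nat) (bas : 'I_d -> 'rV[k]_d) r0 :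
  casimir_polar bas (rbarcoef bas r0).
Proof. by move=> q n; rewrite /rbarcoef subr0; congr (if _ then _ else _); apply/eqP/eqP; lia. Qed.

Lemma rcoef_pos (k : fieldType) (d : nat) (bas : 'I_d -> 'rV[k]_d) r0 m n :
  rcoef bas r0 (Posz m) n = r0 m n.
Proof. by rewrite /rcoef; case: eqP => [?|_]; [lia | rewrite add0r]. Qed.

Lemma rbarcoef_pos (k : fieldType) (d : nat) (bas : 'I_d -> 'rV[k]_d) r0 m n :
  rbarcoef bas r0 (Posz m) n = - (r0 n m)^T.
Proof. by rewrite /rbarcoef; case: eqP => [?|_]; [lia | rewrite sub0r]. Qed.

Section Duality.
Variables (k : fieldType) (d : nat) (br : 'rV[k]_d -> 'rV[k]_d -> 'rV[k]_d).
Variables (bas : 'I_d -> 'rV[k]_d) (r0 : nat -> nat -> 'M[k]_d).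
Hypothesis br_lie : is_lie_bracket br.
Hypothesis bas_unit : basmx bas \in unitmx.
Hypothesis bas_orthonormal : forall i j, killing br (bas i) (bas j) = (i == j)%:R.

Local Notation r := (rcoef bas r0).
Local Notation rbar := (rbarcoef bas r0).

Lemma generators_orthogonal kk i l j :
  kappa0 br (scomp bas r kk i) (scomp bas rbar l j) = 0.
Proof.
rewrite (kappa0_scomp_pair br_lie bas_unit (rcoef_polar bas r0) (rbarcoef_polar bas r0)).
rewrite [killing _ _ (bas j)]killingC /scomp rbarcoef_pos rcoef_pos.
exact: killing_transpose_pairing.
Qed.

Lemma gsp_rbar_perp t : gsp bas rbar t -> perp br (gsp bas r) t.
Proof.
have r_polar := rcoef_polar bas r0; have rbar_polar := rbarcoef_polar bas r0.
move=> t_gsp; have tL := gsp_laurent bas_unit rbar_polar t_gsp.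
split=> // s s_gsp; have sL := gsp_laurent bas_unit r_polar s_gsp.
case: s_gsp => N [c sE]; case: t_gsp => N' [c' tE].
rewrite (kappa0_ext br_lie (s' := comb bas r N c) (t' := comb bas rbar N' c') sE tE sL tL).
rewrite (kappa0_comb_l br_lie bas_unit r_polar _ _ (comb_laurent bas_unit rbar_polar _ _)).
apply: big1 => kk _; apply: big1 => i _.
have wL := scomp_laurent bas_unit r_polar kk i.
rewrite (kappa0_sym br_lie wL (comb_laurent bas_unit rbar_polar _ _)).
rewrite (kappa0_comb_l br_lie bas_unit rbar_polar _ _ wL) big1 ?mulr0 // => l _.
apply: big1 => j _.
rewrite (kappa0_sym br_lie (scomp_laurent bas_unit rbar_polar l j) wL).
by rewrite generators_orthogonal mulr0.
Qed.

(* g(r)^perp is contained in g(rbar): correct t by the element of g(rbar)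
   with the same principal part, and apply perp_taylor_zero. *)
Lemma perp_gsp_rbar t : perp br (gsp bas r) t -> gsp bas rbar t.
Proof.
have r_polar := rcoef_polar bas r0; have rbar_polar := rbarcoef_polar bas r0.
move=> t_perp; have tL : laurent t by case: t_perp.
pose c q i := (t (Negz q) *m invmx (basmx bas)) 0 i.
pose u := comb bas rbar (lowbound t) c.
have u_perp : perp br (gsp bas r) u by apply: gsp_rbar_perp; exists (lowbound t), c.
have tu_taylor : vanishes_below 0 (fun p => t p - u p).
  case=> [m|q] q_neg; first by lia.
  have [q_lt|q_ge] := ltnP q (lowbound t).
    by rewrite /u comb_neg // -row_bas_expand ?subrr.
  rewrite /u (lowbound_vanishes tL) ?(comb_vanishes bas_unit rbar_polar) ?subrr //;
  by rewrite NegzE; lia.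
have tu0 := perp_taylor_zero br_lie bas_unit r_polar bas_orthonormal
              (perp_sub br_lie (gsp_laurent bas_unit r_polar) t_perp u_perp) tu_taylor.
by exists (lowbound t), c => p; apply/eqP; rewrite -subr_eq0 tu0.
Qed.

(* If g(r) is Lagrangian, then w_(n,i) - wb_(n,i) is a power series in
   g(r)^perp, hence zero, so r and rbar have the same coefficients. *)
Lemma self_dual_skew :
  (forall t, perp br (gsp bas r) t <-> gsp bas r t) -> skew_symmetric bas r0.
Proof.
have r_polar := rcoef_polar bas r0; have rbar_polar := rbarcoef_polar bas r0.
move=> self_dual [m|q] n; last by rewrite r_polar rbar_polar.
apply: (scomp_inj bas_unit) => i.
have w_perp := (self_dual _).2 (gsp_scomp bas r n i).
have wb_perp := gsp_rbar_perp (gsp_scomp bas rbar n i).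
have diff_taylor : vanishes_below 0 (fun p => scomp bas rbar n i p - scomp bas r n i p).
  case=> [p|q] p_neg; first by lia.
  by rewrite (scomp_neg bas_unit rbar_polar) (scomp_neg bas_unit r_polar) subrr.
have diff0 := perp_taylor_zero br_lie bas_unit r_polar bas_orthonormal
  (perp_sub br_lie (gsp_laurent bas_unit r_polar) wb_perp w_perp) diff_taylor (Posz m).
by apply/eqP; rewrite -subr_eq0 diff0.
Qed.

End Duality.

Theorem lemma1p19 (k : fieldType) (d : nat)
  (br : 'rV[k]_d -> 'rV[k]_d -> 'rV[k]_d) (bas : 'I_d -> 'rV[k]_d)
  (r0 : nat -> nat -> 'M[k]_d) :
  [pchar k] =i pred0 ->
  is_lie_bracket br ->
  semisimple br ->
  basmx bas \in unitmx ->
  (forall i j, killing br (bas i) (bas j) = (i == j)%:R) ->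
  gen_rmatrix br bas r0 ->
  (forall t, perp br (gsp bas (rcoef bas r0)) t <-> gsp bas (rbarcoef bas r0) t)
  /\
  (skew_symmetric bas r0 <->
     (forall t, perp br (gsp bas (rcoef bas r0)) t <-> gsp bas (rcoef bas r0) t)).
Proof.
move=> _ br_lie _ bas_unit bas_orthonormal _.
have duality t : perp br (gsp bas (rcoef bas r0)) t <-> gsp bas (rbarcoef bas r0) t.
  split; first exact: perp_gsp_rbar.
  exact: gsp_rbar_perp.
split=> //; split=> [skew t|]; last exact: self_dual_skew.
by rewrite duality; split; apply: gsp_ext => p n; rewrite skew.
Qed.
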